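(* For an odd integer $t\ge1$, in $S_{\mathrm{alg}}$, $$h(1)\,h[-1]^t\mathbf 1=\sum_{k\ge0}\binom{t}{2k+1}\frac{(2k+1)!}{k!\,(-24)^k}\,h(-1)^{t-2k-1}\mathbf 1.$$
   Context: $S_{\mathrm{alg}}=\mathbb{Q}[h(-1),h(-2),\dots]$ is the rank-one Heisenberg VOA with vacuum $\mathbf 1=1$; $h(n)$ for $n<0$ is multiplication by $h(n)$, $h(0)=0$, and $h(n)=n\,\partial/\partial h(-n)$ for $n>0$. The square-bracket mode $h[-1]$ is $h[-1]=\mathrm{Res}_w\,h(w)(\log(1+w))^{-1}=\sum_{k\ge0}c_k\,h(k-1)$ where $h(w)=\sum_m h(m)w^{-m-1}$ and $\sum_{k\ge0}c_kw^{k-1}=1/\log(1+w)$, so $h[-1]=h(-1)+\tfrac12h(0)-\tfrac1{12}h(1)+\tfrac1{24}h(2)-\cdots$. *)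

From HB Require Import structures.
From mathcomp Require Import all_boot all_order all_algebra.
From mathcomp Require Import finmap.
From mathcomp.multinomials Require Import monalg.
Set Implicit Arguments. Unset Strict Implicit. Unset Printing Implicit Defensive.
Import Order.TTheory GRing.Theory Num.Theory.
Local Open Scope ring_scope.

(* S_alg = Q[h(-1), h(-2), ...]: polynomials over rat in variables indexed by
   nat; the variable with index i stands for h(-(i+1)). *)
Definition Salg := {malg rat[cmonom nat]}.

Definition hvar (i : nat) : Salg := << ucm i >>.

Definition vac : Salg := 1.

Definition dmon (i : nat) (m : cmonom nat) : Salg :=
  (m i)%:R *: << divcm m (ucm i) >>.
Definition pderiv (i : nat) (p : Salg) : Salg :=
  \sum_(m <- msupp p) p@_m *: dmon i m.

(* Heisenberg modes h(n), n : int:  n<0 multiplication by h(n), h(0) = 0,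
   n>0 acts as n * d/d h(-n). *)
Definition hmode (n : int) (p : Salg) : Salg :=
  match n with
  | Posz 0 => 0
  | Posz k.+1 => k.+1%:R *: pderiv k p
  | Negz k => hvar k * p
  end.

(* Coefficients c_k of  sum_k c_k w^(k-1) = 1/log(1+w), i.e. the coefficients of
   the reciprocal of the power series log(1+w)/w = sum_j (-1)^j w^j/(j+1). *)
Definition logc (j : nat) : rat := (-1) ^+ j / (j.+1)%:R.
Fixpoint cseq (k : nat) : seq rat :=
  match k with
  | 0 => [:: 1]
  | k'.+1 => let s := cseq k' in
      rcons s (- \sum_(1 <= j < k'.+2) logc j * nth 0 s (k'.+1 - j))
  end.
Definition cc (k : nat) : rat := nth 0 (cseq k) k.

(* A bound beyond which all terms c_k h(k-1) p vanish: h(k-1) for k >= 2 is a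
   multiple of d/d h(-(k-1)), which kills p once k-2 exceeds every variable
   index occurring in p. *)
Definition hbound (p : Salg) : nat :=
  (\max_(m <- msupp p) \max_(i <- finsupp m) i)%N.+3.

Definition hbr_m1 (p : Salg) : Salg :=
  \sum_(k < hbound p) cc k *: hmode (k%:Z - 1) p.

(** On polynomials in [x = h(-1)] alone, every mode [h(k-1)] with [k >= 3]
    vanishes and [h(0) = 0], so [h[-1]] acts as [x + c_2 d/dx] with
    [c_2 = -1/12].  For any constant [c] the powers [(x + c d/dx)^t 1] are the
    Hermite-type polynomials [sum_j t(t-1)...(t-2j+1) / j! (c/2)^j x^(t-2j)],
    because their coefficients satisfy the Pascal-type recursion produced by
    one more application of [x + c d/dx].  Applying [h(1) = d/dx] and writing
    [t(t-1)...(t-2j) = binomial(t, 2j+1) (2j+1)!] gives the formula. *)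

From HB Require Import structures.
From mathcomp Require Import all_boot all_order all_algebra.
From mathcomp Require Import finmap.
From mathcomp.multinomials Require Import monalg.
From mathcomp Require Import ring zify.
Import Order.TTheory GRing.Theory Num.Theory.
Local Open Scope fset_scope.
Local Open Scope ring_scope.

Lemma size_cseq k : size (cseq k) = k.+1.
Proof. by elim: k => //= k IHk; rewrite size_rcons IHk. Qed.

Lemma nth_cseq k i : (i <= k)%N -> nth 0 (cseq k) i = cc i.
Proof.
elim: k => [|k IHk]; first by rewrite leqn0 => /eqP ->.
rewrite leq_eqVlt => /orP [/eqP -> //|]; rewrite ltnS => le_ik.
by rewrite [cseq _]/= nth_rcons size_cseq ltnS le_ik IHk.
Qed.

Lemma ccS k : cc k.+1 = - \sum_(1 <= j < k.+2) logc j * cc (k.+1 - j).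
Proof.
rewrite /cc [cseq _]/= nth_rcons size_cseq ltnn eqxx; congr (- _).
rewrite big_nat_cond [RHS]big_nat_cond.
by apply: eq_bigr => j /andP [/andP [j_gt0 j_lt] _]; rewrite (@nth_cseq k) //; lia.
Qed.

Lemma cc0 : cc 0 = 1. Proof. by []. Qed.

Lemma cc1 : cc 1 = 1 / 2.
Proof. by rewrite ccS big_nat1 subnn cc0 /logc expr1; field. Qed.

Lemma cc2 : cc 2 = - (1 / 12).
Proof. by rewrite ccS big_ltn // big_nat1 /= cc1 cc0 /logc expr1 expr2; field. Qed.

Lemma pderivE_fsubset i p (d : {fset cmonom nat}) : msupp p `<=` d ->
  pderiv i p = \sum_(m <- d) p@_m *: dmon i m.
Proof.
move=> le_pd; rewrite /pderiv (big_fset_incl _ le_pd) //= => m _ /mcoeff_outdom ->.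
by rewrite scale0r.
Qed.

Lemma pderivD i p q : pderiv i (p + q) = pderiv i p + pderiv i q.
Proof.
rewrite !(@pderivE_fsubset i _ (msupp p `|` msupp q)) ?msuppD_le ?fsubsetUl ?fsubsetUr //.
by rewrite -big_split /=; apply: eq_bigr => m _; rewrite mcoeffD scalerDl.
Qed.

Lemma pderivZ i c p : pderiv i (c *: p) = c *: pderiv i p.
Proof.
rewrite (@pderivE_fsubset i _ (msupp p)) ?msuppZ_le // /pderiv scaler_sumr.
by apply: eq_bigr => m _; rewrite mcoeffZ; symmetry; apply: scalerA.
Qed.

Lemma pderiv0 i : pderiv i 0 = 0.
Proof. by rewrite /pderiv msupp0 big_seq_fset0. Qed.

Lemma pderiv_sum i (I : Type) (r : seq I) (P : pred I) (F : I -> Salg) :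
  pderiv i (\sum_(j <- r | P j) F j) = \sum_(j <- r | P j) pderiv i (F j).
Proof. exact: (big_morph _ (pderivD i) (pderiv0 i)). Qed.

Lemma pderivU i m : pderiv i << m >> = dmon i m.
Proof. by rewrite /pderiv msuppU1 big_seq_fset1 mcoeffUU scale1r. Qed.

Local Notation x := (hvar 0).

Fixpoint xmon n : cmonom nat :=
  if n is n'.+1 then mmul (ucm 0%N) (xmon n') else @mone (cmonom nat).

Lemma xmonE n i : xmon n i = if i == 0%N then n else 0%N.
Proof.
elim: n => [|n IHn] /= in i *; first by rewrite cm1; case: ifP.
by rewrite cmM cmU IHn; case: i.
Qed.

Lemma hvar0X n : x ^+ n = << xmon n >>.
Proof.
elim: n => [|n IHn]; first exact: expr0.
rewrite exprS IHn /hvar malgM_def fgmulUU mulr1; reflexivity.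
Qed.

Lemma divcm_xmon n : divcm (xmon n) (ucm 0%N) = xmon n.-1.
Proof.
apply/eqP/cmP => i; rewrite divcmE !xmonE ucmE.
by case: i => [|i] /=; rewrite ?subn1.
Qed.

Lemma pderiv_hvar0X n : pderiv 0 (x ^+ n) = n%:R *: x ^+ n.-1.
Proof. by rewrite hvar0X pderivU /dmon xmonE eqxx divcm_xmon -hvar0X. Qed.

Definition only_hvar0 (p : Salg) :=
  forall m, m \in msupp p -> forall i, (0 < i)%N -> m i = 0%N.

Lemma only_hvar0D p q : only_hvar0 p -> only_hvar0 q -> only_hvar0 (p + q).
Proof.
move=> hp hq m /(fsubsetP (msuppD_le p q)).
by rewrite in_fsetU => /orP [/hp|/hq].
Qed.

Lemma only_hvar0Z c p : only_hvar0 p -> only_hvar0 (c *: p).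
Proof. by move=> hp m /(fsubsetP (msuppZ_le c p)); apply: hp. Qed.

Lemma only_hvar0_sum (I : Type) (r : seq I) (P : pred I) (F : I -> Salg) :
  (forall j, only_hvar0 (F j)) -> only_hvar0 (\sum_(j <- r | P j) F j).
Proof.
move=> hF; apply: big_ind => //; last exact: only_hvar0D.
by move=> m; rewrite msupp0 in_fset0.
Qed.

Lemma only_hvar0X n : only_hvar0 (x ^+ n).
Proof.
rewrite hvar0X => m; rewrite msuppU1 in_fset1 => /eqP -> i.
by rewrite xmonE; case: i.
Qed.

Lemma hbound_only_hvar0 p : only_hvar0 p -> hbound p = 3%N.
Proof.
move=> hp; rewrite /hbound big1_seq // => m /andP [_ hm].
rewrite big1_seq // => i /andP [_ hi]; apply/eqP; apply: contraTT hi => i_neq0.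
by rewrite -cmE_neq0 negbK; apply/eqP; apply: (hp m hm); rewrite lt0n.
Qed.

Lemma hbr_m1_only_hvar0 p :
  only_hvar0 p -> hbr_m1 p = x * p + cc 2 *: pderiv 0 p.
Proof.
move=> hp; rewrite /hbr_m1 hbound_only_hvar0 // !big_ord_recr big_ord0 /=.
rewrite cc0 subnn scaler0 addr0 add0r.
(* A plain [rewrite !scale1r] lets unification unfold the operations of the
   monomial algebra and does not terminate in practice. *)
by apply: (f_equal2 +%R); [exact: scale1r | rewrite scale1r].
Qed.

Section HermitePolynomials.
Variable c : rat.

Definition hcoef t j : rat := (t ^_ j.*2)%:R / (j`!)%:R * (c / 2) ^+ j.

Definition hpoly t : Salg := \sum_(0 <= j < t.+1) hcoef t j *: x ^+ (t - j.*2).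

Lemma hcoef_small t j : (t < j.*2)%N -> hcoef t j = 0.
Proof. by move=> lt_t2j; rewrite /hcoef ffact_small // !mul0r. Qed.

Lemma hcoef0 t : hcoef t 0 = 1.
Proof. by rewrite /hcoef ffactn0 fact0 expr0 divr1 mulr1. Qed.

Lemma ffactSS t m : (t.+1 ^_ m.+1 = t ^_ m.+1 + m.+1 * t ^_ m)%N.
Proof. by rewrite -!bin_ffact binS factS mulnDl; ring. Qed.

Lemma hcoefSS t j :
  hcoef t.+1 j.+1 = hcoef t j.+1 + c * (t - j.*2)%N%:R * hcoef t j.
Proof.
have ffactE : (t.+1 ^_ j.+1.*2
    = t ^_ j.+1.*2 + j.*2.+2 * (t ^_ j.*2 * (t - j.*2)))%N.
  by rewrite doubleS ffactSS (ffactnSr t j.*2).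
have fact_neq0 : (j`!)%:R != 0 :> rat by rewrite pnatr_eq0 -lt0n fact_gt0.
rewrite /hcoef ffactE factS natrD !natrM exprS -doubleS -mul2n natrM.
by field; rewrite fact_neq0 addrC natr1 pnatr_eq0.
Qed.

Lemma hcoef_pascal_sum (V : lmodType rat) (f : nat -> V) t :
  \sum_(0 <= j < t.+1) hcoef t j *: f (t.+1 - j.*2)%N
    + \sum_(0 <= j < t.+1) (c * (t - j.*2)%N%:R * hcoef t j) *: f (t.+1 - j.+1.*2)%N
  = \sum_(0 <= j < t.+2) hcoef t.+1 j *: f (t.+1 - j.*2)%N.
Proof.
rewrite big_nat_recl // [RHS]big_nat_recl // !hcoef0 -addrA; congr (_ + _).
have -> : \sum_(0 <= j < t) hcoef t j.+1 *: f (t.+1 - j.+1.*2)%N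
    = \sum_(0 <= j < t.+1) hcoef t j.+1 *: f (t.+1 - j.+1.*2)%N.
  by rewrite [RHS]big_nat_recr //= hcoef_small ?scale0r ?addr0 // doubleS; lia.
by rewrite -big_split; apply: eq_bigr => j _; rewrite hcoefSS scalerDl.
Qed.

Lemma hpolyS t : x * hpoly t + c *: pderiv 0 (hpoly t) = hpoly t.+1.
Proof.
have mulx j : x * (hcoef t j *: x ^+ (t - j.*2))
    = hcoef t j *: x ^+ (t.+1 - j.*2).
  have [le_2jt | lt_t2j] := leqP j.*2 t.
    by rewrite subSn // exprS; apply/esym/scalerAr.
  by rewrite hcoef_small // !scale0r; apply: mulr0.
have derx j : c *: pderiv 0 (hcoef t j *: x ^+ (t - j.*2))
    = (c * (t - j.*2)%N%:R * hcoef t j) *: x ^+ (t.+1 - j.+1.*2).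
  have -> : (t.+1 - j.+1.*2)%N = (t - j.*2).-1 by rewrite doubleS; lia.
  by rewrite pderivZ pderiv_hvar0X !scalerA mulrAC.
rewrite /hpoly pderiv_sum mulr_sumr scaler_sumr.
under eq_bigr do rewrite mulx.
under [in X in _ + X]eq_bigr do rewrite derx.
exact: (@hcoef_pascal_sum Salg (fun n => x ^+ n)).
Qed.

Lemma only_hvar0_hpoly t : only_hvar0 (hpoly t).
Proof. by apply: only_hvar0_sum => j; apply/only_hvar0Z/only_hvar0X. Qed.

Lemma hcoef_binomial t k : hcoef t k * (t - k.*2)%N%:R
  = 'C(t, k.*2.+1)%:R * (k.*2.+1)`!%:R / (k`!)%:R * (c / 2) ^+ k.
Proof. by rewrite /hcoef -natrM bin_ffact ffactnSr natrM; ring. Qed.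

End HermitePolynomials.

Lemma hmode1 p : hmode 1 p = pderiv 0 p.
Proof. exact: scale1r. Qed.

Lemma iter_hbr_m1_vac t : iter t hbr_m1 vac = hpoly (cc 2) t.
Proof.
elim: t => [|t IHt]; first by rewrite /hpoly big_nat1 hcoef0 scale1r.
rewrite iterS IHt hbr_m1_only_hvar0; [exact: hpolyS | exact: only_hvar0_hpoly].
Qed.

Theorem mainTheorem4 (t : nat) (ht : odd t) :
  hmode 1 (iter t hbr_m1 vac) =
  \sum_(k < t.+1)
     ((('C(t, k.*2.+1))%:R * ((k.*2.+1)`!)%:R / ((k`!)%:R * (-24) ^+ k) : rat)
       *: (hvar 0 ^+ (t - k.*2.+1) * vac)).
Proof.
(* The identity holds for every [t]. *)
have half_cc2 : cc 2 / 2 = (-24)^-1 by rewrite cc2; field.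
rewrite hmode1 iter_hbr_m1_vac /hpoly big_mkord pderiv_sum.
apply: eq_bigr => k _.
have -> : (t - k.*2.+1)%N = (t - k.*2).-1 by lia.
rewrite pderivZ pderiv_hvar0X scalerA hcoef_binomial half_cc2 exprVn invfM mulrA.
by rewrite /vac mulr1.
Qed.
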